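(* Let $S$ be a finite Abelian group, $t\ge 1$, and let $X$ be a set of $m$ MIX servers equipped with an $(m,b,t)$-verifiers set system $(X,\{B_1,\dots,B_b\})$; write each block as an ordered tuple $B_k=(MIX_{k,1},\dots,MIX_{k,t+1})$ with leader $MIX_{k,1}$ (blocks may share servers). Consider the following protocol transmitting messages $s_1,\dots,s_v\in S$ from a single party $R$ to $v$ recipients. For each $i$, $R$ chooses shares $\pi^1_{i,1},\dots,\pi^1_{i,t+1}\in S$ uniformly at random subject to $\sum_j \pi^1_{i,j}=s_i$ and privately sends $\pi^1_{i,j}$ to $MIX_{1,j}$. For $k=1,\dots,b$: the leader of $B_k$ chooses a uniformly random $\rho_k\in S_v$ and the servers of $B_k$ reindex their shares by $\pi^k_{i,j}:=\pi^k_{\rho_k(i),j}$; the leader of $B_k$ chooses uniformly random modifiers $\omega^k_{i,j}\in S$ and privately sends $\omega^k_{i,j}$ to $MIX_{k,j}$, who adds it to its share, giving shares $\pi^{k+1}_{i,j}$ of $\pi^{k+1}_i=\omega^k_i+\pi^k_i$ where $\omega^k_i=\sum_j\omega^k_{i,j}$; shares are then passed to the next block either (a) by re-sharing: each server of $B_k$ re-shares its share additively among the $t+1$ servers of $B_{k+1}$ with fresh uniform randomness and each server of $B_{k+1}$ sums the $t+1$ values it receives (with a final re-sharing after $B_b$), or (b) directly ($MIX_{k,j}$ to $MIX_{k+1,j}$) in the case that $X$ is under $t$-confinement. Finally, denoting the shares held by $MIX_{b,j}$ by $\phi_{i,j}$, $MIX_{b,j}$ sends $\phi_{i,j}$ to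 the $i$-th recipient over $t+1$ network-disjoint paths (one per $j$), and the recipient sums the $t+1$ shares. Suppose the adversary is passive, computationally unbounded, and controls at most $t$ parties (MIX servers or communication paths). Then this protocol is a perfectly reliable, perfectly private and perfectly anonymous message transmission protocol.
   Context: A set system $(X,\mathcal{B})$ with $X=\{1,\dots,m\}$ and blocks $B_1,\dots,B_b\subset X$ is an $(m,b,t)$-verifiers set system if $|X|=m$, $|B_i|=t+1$ for all $i$, and for every $F\subset X$ with $|F|\le t$ there is a block $B_i$ with $F\cap B_i=\emptyset$. The set $X$ of MIX servers is under $t$-confinement if for every $T\subseteq X$ with $|T|=t$, the members of $T$ appear in at most $t$ distinct positions (indices $j$ in the ordered tuples $B_k$) over all blocks used. Private channels are assumed between $R$ and servers of $B_1$, between servers of consecutive blocks, and from servers of $B_b$ to the recipients via the disjoint paths. Perfectly reliable: each message is received by its intended recipient with probability 1. Perfectly private: for any coalition of at most $t$ corrupted parties, the probability of correctly determining any transmitted message is the same whether or not they are given their view. Perfectly anonymous: for any coalition of at most $t$ corrupted parties, the probability of correctly determining which recipient received any given message is the same whether or not they are given their view. *)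

From mathcomp Require Import all_boot all_order all_algebra all_fingroup.
Set Implicit Arguments. Unset Strict Implicit. Unset Printing Implicit Defensive.
Import GRing.Theory Num.Theory.
Local Open Scope ring_scope.

(* Set systems.  Servers are X = 'I_m; block k (k : 'I_b) is the ordered
   (t+1)-tuple (B k 0, ..., B k t); position 0 is the leader.            *)

Definition verifiers (m b t : nat) (B : 'I_b -> 'I_t.+1 -> 'I_m) : Prop :=
  (forall k, injective (B k)) /\
  (forall F : {set 'I_m}, (#|F| <= t)%N -> exists k : 'I_b, forall j, B k j \notin F).

Definition t_confined (m b t : nat) (B : 'I_b -> 'I_t.+1 -> 'I_m) : Prop :=
  forall T : {set 'I_m}, #|T| = t ->
    (#|[set j : 'I_t.+1 | [exists k : 'I_b, B k j \in T]]| <= t)%N.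

Section Protocol.
Variables (S : finZmodType) (t m b v : nat) (B : 'I_b -> 'I_t.+1 -> 'I_m).

Definition Msg := {ffun 'I_v -> S}.

(* All random coins of the protocol:
   - pi1 (i,j)      : initial shares chosen by R,
   - rho k          : permutation chosen by the leader of block k,
   - om (k,i,j)     : modifiers chosen by the leader of block k,
   - rs (k,i,j,l)   : the t free pieces (l < t) of the additive re-sharing by
                      server j of block k of its share of message i
                      (the last piece is the share minus their sum). *)
Definition Coins := ({ffun 'I_v * 'I_t.+1 -> S} * {ffun 'I_b -> {perm 'I_v}}
  * {ffun 'I_b * 'I_v * 'I_t.+1 -> S} * {ffun 'I_b * 'I_v * 'I_t.+1 * 'I_t -> S})%type.

Definition pi1 (c : Coins) i j := c.1.1.1 (i, j).
Definition rhoN (c : Coins) (n : nat) : {perm 'I_v} :=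
  if insub n is Some k then c.1.1.2 k else 1%g.
Definition omN (c : Coins) (n : nat) i j : S :=
  if insub n is Some k then c.1.2 (k, i, j) else 0.
Definition rsN (c : Coins) (n : nat) i j (l : 'I_t) : S :=
  if insub n is Some k then c.2 (k, i, j, l) else 0.

(* Support of the coins for messages s: initial shares sum to s_i, and the
   modifiers of each block and index sum to 0 (so that they re-randomize the
   sharing without changing the shared value); the coins are drawn uniformly
   from this set (i.e. all components independent, each uniform subject to
   its constraint). *)
Definition Omega (s : Msg) : {set Coins} :=
  [set c : Coins | [forall i, \sum_(j < t.+1) pi1 c i j == s i] &&
                   [forall k : 'I_b, forall i, \sum_(j < t.+1) c.1.2 (k, i, j) == 0]].

Definition piece (c : Coins) (n : nat) (z : S) i j (j' : 'I_t.+1) : S :=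
  if insub (val j') is Some l then rsN c n i j l
  else z - \sum_(l < t) rsN c n i j l.

(* shares held by the servers of the n-th block (0-based) before it mixes;
   [a = true]: variant (a) re-sharing, [a = false]: variant (b) direct passing.
   sh a c b are the final shares phi held by the last block (in variant (a)
   after the final re-sharing among the servers of the last block). *)
Fixpoint sh (a : bool) (c : Coins) (n : nat) : 'I_v -> 'I_t.+1 -> S :=
  match n with
  | 0 => pi1 c
  | n'.+1 => fun i j' =>
      let q i j := sh a c n' (rhoN c n' i) j + omN c n' i j in
      if a then \sum_(j < t.+1) piece c n' (q i j) i j j' else q i j'
  end.

Definition qsh a c n i j := sh a c n (rhoN c n i) j + omN c n i j.

Definition phi a c := sh a c b.

Definition output a c (i : 'I_v) : S := \sum_(j < t.+1) phi a c i j.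

(* composite mixing permutation: shares at index i of step n are shares of
   message s_(tau c n i) *)
Fixpoint tau (c : Coins) (n : nat) : {perm 'I_v} :=
  match n with 0 => 1%g | n'.+1 => (rhoN c n' * tau c n')%g end.

(* corruptible parties: MIX servers and the communication paths (i,j) *)
Definition Party := ('I_m + ('I_v * 'I_t.+1))%type.

Definition srv (n : nat) (j : 'I_t.+1) : option 'I_m :=
  omap (fun k : 'I_b => B k j) (insub n).
Definition obsBy (C : {set Party}) n j : bool :=
  if srv n j is Some x then inl x \in C else false.

Inductive label :=
| LInit of 'I_v & 'I_t.+1                   (* R -> MIX_{1,j}: pi1 (i,j) *)
| LPerm of 'I_b                              (* leader -> servers of B_k : rho_k *)
| LMod of 'I_b & 'I_v & 'I_t.+1              (* leader -> MIX_{k,j} : om *)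
| LPiece of 'I_b & 'I_v & 'I_t.+1 & 'I_t.+1  (* variant (a): MIX_{k,j} -> MIX_{k+1,j'} *)
| LPass of 'I_b & 'I_v & 'I_t.+1             (* variant (b): MIX_{k,j} -> MIX_{k+1,j} *)
| LFinal of 'I_v & 'I_t.+1.                  (* MIX_{b,j} -> recipient i via path (i,j) *)

Definition Val := (S + {perm 'I_v})%type.

Definition value (a : bool) (c : Coins) (l : label) : Val :=
  match l with
  | LInit i j => inl (pi1 c i j)
  | LPerm k => inr (rhoN c k)
  | LMod k i j => inl (omN c k i j)
  | LPiece k i j j' => inl (piece c k (qsh a c k i j) i j j')
  | LPass k i j => inl (qsh a c k i j)
  | LFinal i j => inl (phi a c i j)
  end.

Definition observes (a : bool) (C : {set Party}) (l : label) : bool :=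
  match l with
  | LInit i j => obsBy C 0 j
  | LPerm k => [exists j, obsBy C k j]
  | LMod k i j => obsBy C k 0 || obsBy C k j
  | LPiece k i j j' =>
      a && (obsBy C k j || obsBy C (if (k.+1 < b)%N then k.+1 else k) j')
  | LPass k i j => ~~ a && (k.+1 < b)%N && (obsBy C k j || obsBy C k.+1 j)
  | LFinal i j => obsBy C b.-1 j || (inr (i, j) \in C)
  end.

(* the view of coalition C: everything it sees (its own coins are determined
   by the values it sends) *)
Definition view (a : bool) (C : {set Party}) (c : Coins) : label -> option Val :=
  fun l => if observes a C l then Some (value a c l) else None.

Definition prior (D : {ffun Msg -> rat}) : Prop :=
  (forall s, 0 <= D s) /\ \sum_s D s = 1.

Definition Pr (D : {ffun Msg -> rat}) (E : Msg -> Coins -> bool) : rat :=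
  \sum_(s : Msg) D s * (#|[set c in Omega s | E s c]|%:R / #|Omega s|%:R).

(* the best probability of correctly determining Y is the same with and
   without the view V *)
Definition same_guess {W : Type} {T : eqType} (D : {ffun Msg -> rat})
  (V : Msg -> Coins -> W) (Y : Msg -> Coins -> T) : Prop :=
  (forall g : W -> T, exists y : T,
      Pr D (fun s c => g (V s c) == Y s c) <= Pr D (fun s c => y == Y s c)) /\
  (forall y : T, exists g : W -> T,
      Pr D (fun s c => y == Y s c) <= Pr D (fun s c => g (V s c) == Y s c)).

Definition perfectly_reliable (a : bool) : Prop :=
  forall D, prior D ->
    Pr D (fun s c => [forall i, output a c i == s (tau c b i)]) = 1.

Definition perfectly_private (a : bool) : Prop :=
  forall D, prior D -> forall C : {set Party}, (#|C| <= t)%N ->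
    forall i : 'I_v, same_guess D (fun _ c => view a C c) (fun s _ => s i).

(* the recipient of message i is (tau c b)^-1 i *)
Definition perfectly_anonymous (a : bool) : Prop :=
  forall D, prior D -> forall C : {set Party}, (#|C| <= t)%N ->
    forall i : 'I_v, same_guess D (fun _ c => view a C c) (fun _ c => (tau c b)^-1%g i).

End Protocol.

(* Reliability holds because in every run the t+1 shares of each index sum to
   the message routed to that index.  Privacy and anonymity follow from a
   simulation.  The verifiers property yields a block [ks] without corrupted
   servers.  Given message vectors s, s' and a permutation pi, every run on s is
   mapped injectively to a run on s' that gives the coalition the same view and
   whose overall mixing permutation is composed with pi: one share of each
   index, at positions the coalition never observes, is shifted by the
   difference between the messages it carries, and the honest leader of block
   [ks] changes its permutation and modifiers to absorb the shift and reroute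
   the messages.  Hence the number of coin choices producing a given view
   depends neither on the messages nor, for fixed messages, on who receives
   what.  Unobserved positions exist because the coalition has at most t
   members while blocks have t+1; with direct passing, t-confinement provides
   a position that no corrupted server occupies in any block. *)

From mathcomp Require Import all_boot all_order all_algebra all_fingroup zify.
From Stdlib Require Import FunctionalExtensionality.
Set Implicit Arguments. Unset Strict Implicit. Unset Printing Implicit Defensive.
Import Order.TTheory GRing.Theory Num.Theory.

Lemma exists_notin (T : finType) (Q : {set T}) : #|Q| < #|T| -> exists x, x \notin Q.
Proof.
move=> card_Q; apply/existsP; rewrite -negb_forall; apply: contraTN card_Q.
move=> /forallP all_in; rewrite -leqNgt (_ : Q = setT) ?cardsT //.
by apply/setP => x; rewrite inE all_in.
Qed.

Lemma odflt_pickP (T : finType) (P : pred T) x0 : (exists x, P x) -> P (odflt x0 [pick x | P x]).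
Proof. by case=> x Px; case: pickP => [y Py // | none]; rewrite none in Px. Qed.

Lemma card_le_injection (T : finType) (f : T -> T) (A A' : {set T}) :
  injective f -> {in A, forall c, f c \in A'} -> (#|A| <= #|A'|)%N.
Proof.
move=> f_inj fA; rewrite -(card_imset A f_inj); apply: subset_leq_card.
by apply/subsetP => _ /imsetP[c c_in ->]; apply: fA.
Qed.

Lemma card_fibers (T U : finType) (A : {set T}) (f : T -> U) :
  #|A| = (\sum_(z : U) #|[set c in A | f c == z]|)%N.
Proof.
rewrite -sum1_card (partition_big f predT) //=; apply: eq_bigr => z _.
by rewrite -sum1_card; apply: eq_bigl => c; rewrite !inE.
Qed.

Local Open Scope ring_scope.

Lemma sum_mulrb_eq (I : finType) (V : zmodType) (x : V) (q : I) (P : bool) :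
  \sum_(i : I) x *+ ((i == q) && P) = x *+ P.
Proof.
rewrite (bigD1 q) //= eqxx big1 ?addr0 // => i /negbTE ne_iq.
by rewrite ne_iq mulr0n.
Qed.

Lemma eq_of_sum_widen (V : zmodType) n (f g : 'I_n.+1 -> V) :
  \sum_i f i = \sum_i g i ->
  (forall l : 'I_n, f (widen_ord (leqnSn n) l) = g (widen_ord (leqnSn n) l)) -> f =1 g.
Proof.
move=> eq_sum eq_widen i; case: (ltnP i n) => [lt_in | le_ni].
  by have -> : i = widen_ord (leqnSn n) (Ordinal lt_in) by apply/val_inj.
have -> : i = ord_max by apply/val_inj/eqP; rewrite /= eqn_leq le_ni -ltnS ltn_ord.
move: eq_sum; rewrite !big_ord_recr /= (eq_bigr _ (fun l _ => eq_widen l)).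
by move/addrI.
Qed.

Section Shares.
Variables (S : finZmodType) (t b v : nat).
Implicit Types (c : Coins S t b v) (s : Msg S v).

Lemma sum_piece c n z i j : \sum_(j' < t.+1) piece c n z i j j' = z.
Proof.
rewrite big_ord_recr /= /piece insubN ?ltnn //.
under eq_bigr => l _ do rewrite valK.
by rewrite addrC subrK.
Qed.

Lemma sum_sh a c s n z : c \in Omega t b s -> (n <= b)%N ->
  \sum_(j < t.+1) sh a c n z j = s (tau c n z).
Proof.
rewrite inE => /andP[/forallP sum_pi1 /forallP sum_om].
elim: n z => [|n IHn] z lt_nb /=; first by rewrite perm1; apply/eqP.
have sum_qsh : \sum_(j < t.+1) qsh a c n z j = s (tau c n.+1 z).
  rewrite big_split /= IHn 1?ltnW // /omN insubT /=.
  by rewrite (eqP (forallP (sum_om (Ordinal lt_nb)) z)) addr0 permM.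
case: a {IHn} sum_qsh => sum_qsh //=.
by rewrite exchange_big /= -sum_qsh; apply: eq_bigr => j _; rewrite sum_piece.
Qed.

Lemma eq_tau c1 c2 n : (forall k, (k < n)%N -> rhoN c1 k = rhoN c2 k) -> tau c1 n = tau c2 n.
Proof.
elim: n => [|n IHn] eq_rho //=.
by rewrite eq_rho // IHn // => k lt_kn; apply/eq_rho/ltnW.
Qed.

Lemma tau_suffix_eq c1 c2 lo n : (lo <= n)%N ->
  (forall k, (lo <= k)%N -> rhoN c1 k = rhoN c2 k) ->
  (tau c1 n * (tau c1 lo)^-1 = tau c2 n * (tau c2 lo)^-1)%g.
Proof.
elim: n => [|n IHn]; first by rewrite leqn0 => /eqP <-; rewrite !mulgV.
rewrite leq_eqVlt => /orP[/eqP <- | le_lo_n] eq_rho; first by rewrite !mulgV.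
by rewrite /= -!mulgA IHn // eq_rho.
Qed.

Lemma eq_sh a c1 c2 N : c1.1.1.1 = c2.1.1.1 ->
  (forall n, (n < N)%N -> rhoN c1 n = rhoN c2 n) ->
  (forall n z j, (n < N)%N -> omN c1 n z j = omN c2 n z j) ->
  (forall n z j l, (n < N)%N -> rsN c1 n z j l = rsN c2 n z j l) ->
  forall z j, sh a c1 N z j = sh a c2 N z j.
Proof.
move=> eq_pi1 eq_rho eq_om eq_rs.
suff eq_sh_le n : (n <= N)%N -> forall z j, sh a c1 n z j = sh a c2 n z j by apply: eq_sh_le.
elim: n => [|n IHn] lt_nN z j; first by rewrite /= /pi1 eq_pi1.
have eq_qsh z' j' : qsh a c1 n z' j' = qsh a c2 n z' j'.
  by rewrite /qsh eq_rho // eq_om // IHn // ltnW.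
case: a {IHn} eq_qsh => eq_qsh /=; last exact: eq_qsh.
apply: eq_bigr => j0 _; rewrite -!/(qsh _ _ _ _ _) /piece eq_qsh.
by case: insub => [l|]; [apply: eq_rs | congr (_ - _); apply: eq_bigr => l _; apply: eq_rs].
Qed.

Lemma coins_eq c1 c2 : c1.1.1.1 = c2.1.1.1 -> c1.1.1.2 = c2.1.1.2 ->
  (forall (k : 'I_b) z j, omN c1 k z j = omN c2 k z j) ->
  (forall (k : 'I_b) z j l, rsN c1 k z j l = rsN c2 k z j l) -> c1 = c2.
Proof.
case: c1 c2 => [[[p1 P1] o1] r1] [[[p2 P2] o2] r2] /= -> -> eq_om eq_rs.
congr (_, _, _); apply/ffunP.
  by move=> -[[k z] j]; have := eq_om k z j; rewrite /omN valK.
by move=> -[[[k z] j] l]; have := eq_rs k z j l; rewrite /rsN valK.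
Qed.

Definition trivial_coins s : Coins S t b v :=
  (([ffun ij => if ij.2 == ord0 then s ij.1 else 0], [ffun _ => 1%g]),
   [ffun _ => 0], [ffun _ => 0]).

Lemma trivial_coins_in s : trivial_coins s \in Omega t b s.
Proof.
rewrite inE; apply/andP; split; apply/forallP => i.
  rewrite /pi1 /=; under eq_bigr => j _ do rewrite ffunE /=.
  by rewrite -big_mkcond big_pred1_eq.
by apply/forallP => z /=; under eq_bigr => j _ do rewrite ffunE; rewrite big1_eq.
Qed.

Lemma card_Omega_gt0 s : (0 < #|Omega t b s|)%N.
Proof. by apply/card_gt0P; exists (trivial_coins s); apply: trivial_coins_in. Qed.

Lemma card_Omega_neq0 s : #|Omega t b s|%:R != 0 :> rat.
Proof. by rewrite pnatr_eq0 -lt0n card_Omega_gt0. Qed.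

End Shares.

Lemma protocol_reliable (S : finZmodType) (t b v : nat) (a : bool) : @perfectly_reliable S t b v a.
Proof.
move=> D [_ sumD1]; rewrite /Pr -[RHS]sumD1; apply: eq_bigr => s _.
have -> : [set c in Omega t b s | [forall i, output a c i == s (tau c b i)]] = Omega t b s.
  apply/setP => c; rewrite inE andb_idr // => c_in; apply/forallP => i.
  by rewrite /output /phi (sum_sh a i c_in (leqnn b)).
by rewrite divff ?mulr1 ?card_Omega_neq0.
Qed.

Section Simulation.
Variables (S : finZmodType) (t m b v : nat) (B : 'I_b -> 'I_t.+1 -> 'I_m) (a : bool)
  (C : {set Party t m v}).
Local Notation V := (view (S:=S) B a C).
Local Notation Om := (Omega (S:=S) t b).
Implicit Types (s : Msg S v) (E : (label t b v -> option (Val S v)) -> bool).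

Definition view_simulation s s' (pi : {perm 'I_v}) :=
  exists2 f : Coins S t b v -> Coins S t b v, injective f &
    {in Om s, forall c, [/\ f c \in Om s', V (f c) = V c & tau (f c) b = (pi * tau c b)%g]}.

Hypothesis simulate : forall s s' pi, view_simulation s s' pi.

Lemma card_view_indep s s' E :
  #|[set c in Om s | E (V c)]| = #|[set c in Om s' | E (V c)]|.
Proof.
suff card_le s1 s2 : (#|[set c in Om s1 | E (V c)]| <= #|[set c in Om s2 | E (V c)]|)%N.
  by apply/eqP; rewrite eqn_leq !card_le.
have [f f_inj f_sim] := simulate s1 s2 1%g.
apply: (card_le_injection f_inj) => c; rewrite inE => /andP[c_in Ec].
by have [fc_in Vfc _] := f_sim c c_in; rewrite inE fc_in Vfc Ec.
Qed.

Lemma card_view_recipient s (i : 'I_v) E y y' :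
  #|[set c in Om s | E (V c) && ((tau c b)^-1%g i == y)]| =
  #|[set c in Om s | E (V c) && ((tau c b)^-1%g i == y')]|.
Proof.
suff card_le z z' : (#|[set c in Om s | E (V c) && ((tau c b)^-1%g i == z)]| <=
    #|[set c in Om s | E (V c) && ((tau c b)^-1%g i == z')]|)%N.
  by apply/eqP; rewrite eqn_leq !card_le.
have [f f_inj f_sim] := simulate s s (tperm z z').
apply: (card_le_injection f_inj) => c; rewrite inE => /andP[c_in /andP[Ec /eqP recipient]].
have [fc_in Vfc taufc] := f_sim c c_in.
by rewrite inE fc_in Vfc taufc Ec invMg permM recipient tpermV tpermL /=.
Qed.

Lemma Pr_message_event (D : {ffun Msg S v -> rat}) (T : eqType) (Y : Msg S v -> T) y :
  Pr D (fun s (c : Coins S t b v) => y == Y s) = \sum_s D s * (y == Y s)%:R.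
Proof.
apply: eq_bigr => s _; congr (_ * _); case: (y == Y s) => /=.
  have -> : [set c in Om s | true] = Om s by apply/setP => c; rewrite inE andbT.
  by rewrite divff ?card_Omega_neq0.
have -> : [set c in Om s | false] = set0 by apply/setP => c; rewrite !inE andbF.
by rewrite cards0 mul0r.
Qed.

Lemma same_guess_message D (i : 'I_v) :
  same_guess D (fun _ (c : Coins S t b v) => V c) (fun s _ => s i).
Proof.
split=> [g|y]; last by exists (fun _ => y).
pose s0 : Msg S v := [ffun _ => 0].
pose Q y := \sum_s D s * (y == s i)%:R.
(* [X y], the chance that the guess is [y], does not depend on the messages. *)
pose X y := #|[set c in Om s0 | g (V c) == y]|%:R / #|Om s0|%:R : rat.
have [y_best _ best] := @arg_maxP _ _ S 0 predT Q isT.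
exists y_best; rewrite Pr_message_event -/(Q y_best).
have -> : Pr D (fun s c => g (V c) == s i) = \sum_y Q y * X y.
  rewrite /Pr (eq_bigr (fun s => \sum_y D s * (y == s i)%:R * X y)); last first.
    move=> s _; rewrite (bigD1 (s i)) //= eqxx mulr1 big1 ?addr0.
      have card_Om s1 : #|Om s1| = #|[set c in Om s1 | true]|.
        by apply: eq_card => c; rewrite inE andbT.
      by rewrite /X (card_view_indep s s0 (fun w => g w == s i)) !card_Om
        (card_view_indep s s0 (fun _ => true)).
    by move=> y /negbTE ->; rewrite mulr0 mul0r.
  by rewrite exchange_big; apply: eq_bigr => y _; rewrite mulr_suml.
have sumX : \sum_y X y = 1 by rewrite -mulr_suml -natr_sum -card_fibers divff ?card_Omega_neq0.
rewrite -[Q y_best]mulr1 -sumX mulr_sumr ler_sum // => y _.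
by apply: ler_wpM2r; [rewrite divr_ge0 | apply: best].
Qed.

Lemma same_guess_recipient D (i : 'I_v) :
  same_guess D (fun _ (c : Coins S t b v) => V c) (fun _ c => (tau c b)^-1%g i).
Proof.
split=> [g|y]; last by exists (fun _ => y).
(* Given the view, every recipient is equally likely, so any guess [g] succeeds
   exactly as often as the constant guess [i]. *)
exists i; rewrite le_eqVlt; apply/orP; left; apply/eqP/eq_bigr => s _.
congr (_ * (_ / _)); congr (_%:R).
rewrite (card_fibers _ (fun c => (tau c b)^-1%g i)).
rewrite (card_fibers [set c in Om s | i == (tau c b)^-1%g i] (fun c => g (V c))).
apply: eq_bigr => z _.
transitivity #|[set c in Om s | (g (V c) == z) && ((tau c b)^-1%g i == z)]|.
  apply: eq_card => c; rewrite !inE; move: (g (V c)) ((tau c b)^-1%g i) => u w.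
  by case: (w =P z) => [->|]; rewrite ?andbF ?andbT.
rewrite (card_view_recipient s i (fun w => g w == z) z i).
apply: eq_card => c; rewrite !inE; move: (g (V c)) ((tau c b)^-1%g i) => u w.
by rewrite [i == w]eq_sym -!andbA [(w == i) && _]andbC.
Qed.

End Simulation.

Section Positions.
Local Close Scope ring_scope.
Variables (t m b v : nat) (B : 'I_b -> 'I_t.+1 -> 'I_m) (C : {set Party t m v}).

Definition corrupt_servers : {set 'I_m} := [set y | inl y \in C].

Definition positions (T : {set 'I_m}) : {set 'I_t.+1} :=
  [set j | [exists k, B k j \in T]].

Lemma obsBy_block (k : 'I_b) j : obsBy B C k j = (B k j \in corrupt_servers).
Proof. by rewrite /obsBy /srv valK /= inE. Qed.

Lemma obsBy_notin_positions n j :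
  j \notin positions corrupt_servers -> obsBy B C n j = false.
Proof.
rewrite /obsBy /srv; case: insubP => [k _ _|] //= j_out; apply/negbTE.
by apply: contra j_out => inC; rewrite inE; apply/existsP; exists k; rewrite inE.
Qed.

Lemma card_corrupt_servers : #|corrupt_servers| <= #|C|.
Proof.
rewrite -(card_imset _ (@inl_inj 'I_m ('I_v * 'I_t.+1)%type)); apply: subset_leq_card.
by apply/subsetP => p /imsetP[y]; rewrite inE => Cy ->.
Qed.

Lemma card_block_corrupt (k : 'I_b) (T : {set 'I_m}) :
  injective (B k) -> #|[set j | B k j \in T]| <= #|T|.
Proof.
move=> Bk_inj; rewrite -(card_imset _ Bk_inj); apply: subset_leq_card.
by apply/subsetP => y /imsetP[j]; rewrite inE => Tj ->.
Qed.

Lemma card_servers_paths x :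
  #|corrupt_servers| + #|[set j | inr (x, j) \in C]| <= #|C|.
Proof.
have path_inj : injective (fun j : 'I_t.+1 => inr (x, j) : Party t m v) by move=> j1 j2 [].
rewrite -(card_imset _ (@inl_inj 'I_m ('I_v * 'I_t.+1)%type)) -(card_imset _ path_inj).
set L := imset _ _; set R := imset _ _.
have /eqP <- : #|L :|: R| == #|L| + #|R|.
  rewrite (leq_card_setU L R).2 -setI_eq0; apply/eqP/setP => p; rewrite !inE.
  by apply/negbTE/andP => -[/imsetP[y _ ->] /imsetP[j _]].
apply: subset_leq_card; apply/subsetP => p.
by rewrite inE => /orP[] /imsetP[y]; rewrite inE => Cy ->.
Qed.

Lemma exists_hidden_path (Q : {set 'I_t.+1}) x :
  #|C| <= t -> #|Q| <= #|corrupt_servers| -> exists j, (j \notin Q) && (inr (x, j) \notin C).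
Proof.
move=> card_C card_Q.
have [j] : exists j, j \notin Q :|: [set j | inr (x, j) \in C].
  apply: exists_notin; rewrite card_ord ltnS.
  apply: leq_trans (leq_card_setU Q _).1 _.
  apply: leq_trans _ (leq_trans (card_servers_paths x) card_C).
  by rewrite leq_add2r.
by rewrite !inE negb_or => notinQ; exists j.
Qed.

Lemma exists_unobserved (k : 'I_b) : injective (B k) -> #|C| <= t ->
  exists j, ~~ obsBy B C k j.
Proof.
move=> Bk_inj card_C; have [|j] := @exists_notin _ [set j | B k j \in corrupt_servers].
  by rewrite card_ord ltnS (leq_trans (card_block_corrupt _ Bk_inj))
    ?(leq_trans card_corrupt_servers).
by rewrite inE -obsBy_block; exists j.
Qed.

Lemma exists_hidden_exit (k : 'I_b) x : injective (B k) -> #|C| <= t ->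
  exists j, ~~ obsBy B C k j && (inr (x, j) \notin C).
Proof.
move=> Bk_inj card_C.
have [j] := exists_hidden_path x card_C (card_block_corrupt corrupt_servers Bk_inj).
by rewrite inE -obsBy_block; exists j.
Qed.

Lemma positions_subset (T1 T2 : {set 'I_m}) :
  T1 \subset T2 -> positions T1 \subset positions T2.
Proof.
move=> sub12; apply/subsetP => j; rewrite !inE => /existsP[k Bkj].
by apply/existsP; exists k; apply: (subsetP sub12).
Qed.

Hypotheses (B_inj : forall k, injective (B k)) (confined : t_confined B).

(* A set T with fewer positions than servers can be enlarged by one server
   while keeping that property; iterating up to size t contradicts t-confinement. *)
Lemma positions_grow (k0 : 'I_b) (T : {set 'I_m}) :
  #|T| < t -> #|T| < #|positions T| ->
  exists2 y, y \notin T & #|T|.+1 < #|positions (y |: T)|.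
Proof.
move=> small_T few.
case: (pickP (fun q => q \notin positions T)) => [q q_out | all_in].
  exists (B k0 q).
    by apply: contra q_out => Tq; rewrite inE; apply/existsP; exists k0.
  apply: leq_trans (_ : #|q |: positions T| <= _); first by rewrite cardsU1 q_out.
  apply: subset_leq_card; apply/subsetP => j.
  rewrite !inE => /orP[/eqP ->|/existsP[k Tkj]]; apply/existsP.
    by exists k0; rewrite !inE eqxx.
  by exists k; rewrite !inE Tkj orbT.
have [y y_out] : exists y, y \notin T.
  apply: exists_notin; apply: leq_trans _ (leq_card (B k0) (@B_inj k0)).
  by rewrite card_ord ltnS ltnW.
exists y => //; rewrite (_ : positions _ = setT) ?cardsT ?card_ord //.
apply/eqP; rewrite eqEsubset subsetT; apply/subsetP => j _.
by apply: (subsetP (positions_subset (subsetUr [set y] T))); apply/negbNE/negbT/all_in.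
Qed.

Lemma card_positions (k0 : 'I_b) (T : {set 'I_m}) :
  #|T| <= t -> #|positions T| <= #|T|.
Proof.
move=> card_T; have [d def_d] : {d | t - #|T| = d} by exists (t - #|T|).
elim: d T card_T def_d => [|d IHd] T card_T def_d.
  have card_t : #|T| = t by apply/eqP; rewrite eqn_leq card_T -subn_eq0 def_d.
  by rewrite [X in _ <= X]card_t; apply: confined.
rewrite leqNgt; apply/negP => few.
have small_T : #|T| < t by rewrite -subn_gt0 def_d.
have [y y_out more] := positions_grow k0 small_T few.
have := IHd (y |: T); rewrite cardsU1 y_out add1n subnS def_d => /(_ small_T erefl).
by rewrite leqNgt more.
Qed.

End Positions.

Section Construction.
Variables (S : finZmodType) (t m b v : nat) (B : 'I_b -> 'I_t.+1 -> 'I_m) (a : bool)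
  (C : {set Party t m v}) (ks : nat) (s s' : Msg S v) (pi : {perm 'I_v}).
Variables pos qp : Coins S t b v -> nat -> 'I_v -> 'I_t.+1.
Implicit Types (c : Coins S t b v).

(* [pos c n z] is the position of the share of index [z] entering block [n]
   that is shifted by [shift c n z]; [qp c n z] is the shifted position after
   block [n] has permuted and remasked.  The permutation [mix_tail c] applied
   after block [ks] is left unchanged, so conjugating [pi] by it in [rho_sim]
   turns the overall mixing permutation into [pi * tau c b]. *)
Hypothesis lt_ks_b : (ks < b)%N.
Hypothesis pos_perms : forall c1 c2, c1.1.1.2 = c2.1.1.2 ->
  forall n z, pos c1 n z = pos c2 n z /\ qp c1 n z = qp c2 n z.
Hypothesis pos_step : forall c n z, (n < b)%N -> n != ks -> pos c n (rhoN c n z) = qp c n z.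
Hypothesis pos_direct : a = false -> forall c n z, (n < b)%N -> qp c n z = pos c n.+1 z.

Definition delta (x : 'I_v) := s' x - s x.

Definition mix_tail c := (tau c b * (tau c ks.+1)^-1)%g.

Definition rho_sim c := ((mix_tail c)^-1 * pi * mix_tail c * rhoN c ks)%g.

Definition delta_ks c z := s' (tau c ks (rho_sim c z)) - s (tau c ks.+1 z).

Definition shift c n z :=
  if (n <= ks)%N then delta (tau c n z) else delta_ks c ((tau c ks.+1)^-1%g (tau c n z)).

Definition remask_ks c z j :=
  (sh a c ks (rhoN c ks z) j + delta_ks c z *+ (j == qp c ks z))
  - (sh a c ks (rho_sim c z) j + shift c ks (rho_sim c z) *+ (j == pos c ks (rho_sim c z))).

Definition sim c : Coins S t b v :=
  ((finfun (fun '(i, j) => c.1.1.1 (i, j) + delta i *+ (j == pos c 0 i)),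
    finfun (fun k : 'I_b => if val k == ks then rho_sim c else c.1.1.2 k)),
   finfun (fun '(k, z, j) => c.1.2 (k, z, j) + remask_ks c z j *+ (val k == ks)),
   finfun (fun '(k, z, j, l) => c.2 (k, z, j, l) +
     shift c k.+1 z *+ ((j == qp c k z) && (val l == val (pos c k.+1 z))))).

Lemma pi1_sim c i j : pi1 (sim c) i j = pi1 c i j + delta i *+ (j == pos c 0 i).
Proof. by rewrite /pi1 ffunE. Qed.

Lemma rhoN_sim c n : rhoN (sim c) n = if n == ks then rho_sim c else rhoN c n.
Proof.
rewrite /rhoN; case: insubP => [k _ <-|]; first by rewrite ffunE.
by case: eqP => // ->; rewrite lt_ks_b.
Qed.

Lemma omN_sim c n z j : omN (sim c) n z j = omN c n z j + remask_ks c z j *+ (n == ks).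
Proof.
rewrite /omN; case: insubP => [k _ <-|]; first by rewrite ffunE.
by case: eqP => [->|]; [rewrite lt_ks_b | rewrite addr0].
Qed.

Lemma rsN_sim c n z j l : (n < b)%N -> rsN (sim c) n z j l =
  rsN c n z j l + shift c n.+1 z *+ ((j == qp c n z) && (val l == val (pos c n.+1 z))).
Proof. by move=> lt_nb; rewrite /rsN insubT /= ffunE. Qed.

Lemma tau_sim_le c n : (n <= ks)%N -> tau (sim c) n = tau c n.
Proof.
move=> le_n_ks; apply: eq_tau => k lt_kn.
by rewrite rhoN_sim ifN_eq // ltn_eqF // (leq_trans lt_kn le_n_ks).
Qed.

Lemma mix_tail_sim c : mix_tail (sim c) = mix_tail c.
Proof. by apply: tau_suffix_eq => // k lt_ks_k; rewrite rhoN_sim gtn_eqF. Qed.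

Lemma tau_sim c : tau (sim c) b = (pi * tau c b)%g.
Proof.
rewrite -[tau (sim c) b](mulgKV (tau (sim c) ks.+1)) -/(mix_tail _) mix_tail_sim.
rewrite /= rhoN_sim eqxx tau_sim_le // /rho_sim !mulgA mulgV mul1g -!mulgA.
by rewrite -[(rhoN c ks * _)%g]/(tau c ks.+1) mulVg mulg1.
Qed.

Lemma piece_sim c n x z j j' : (n < b)%N ->
  piece (sim c) n (x + shift c n.+1 z *+ (j == qp c n z)) z j j' =
  piece c n x z j j' + shift c n.+1 z *+ ((j == qp c n z) && (j' == pos c n.+1 z)).
Proof.
move=> lt_nb; move: j'; apply: eq_of_sum_widen => [|l].
  rewrite sum_piece big_split /= sum_piece; congr (_ + _).
  by under eq_bigr => i _ do rewrite andbC; rewrite sum_mulrb_eq.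
by rewrite /piece /= valK rsN_sim // -val_eqE.
Qed.

Lemma qsh_sim_step c n z j : (n < b)%N ->
  (forall w j, sh a (sim c) n w j = sh a c n w j + shift c n w *+ (j == pos c n w)) ->
  sh a (sim c) n (rhoN (sim c) n z) j + omN (sim c) n z j =
  qsh a c n z j + shift c n.+1 z *+ (j == qp c n z).
Proof.
move=> lt_nb sh_sim_n; rewrite rhoN_sim omN_sim sh_sim_n /qsh.
have [-> | ne_n_ks] := eqVneq n ks.
  have -> : shift c ks.+1 z = delta_ks c z by rewrite /shift ltnn /= permK.
  rewrite mulr1n /remask_ks; set old := (sh a c ks _ j + _).
  by rewrite addrCA [old + _]addrC subrK addrCA addrA.
rewrite mulr0n addr0 addrAC pos_step //; congr (_ + _ *+ _).
rewrite /shift ltn_neqAle ne_n_ks /=.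
by case: (n <= ks)%N; rewrite permM.
Qed.

Lemma sh_sim c n z j : (n <= b)%N ->
  sh a (sim c) n z j = sh a c n z j + shift c n z *+ (j == pos c n z).
Proof.
elim: n z j => [|n IHn] z j lt_nb; first by rewrite /= pi1_sim /shift leq0n perm1.
have qsh_n := qsh_sim_step _ _ lt_nb (fun w j => IHn w j (ltnW lt_nb)).
rewrite /=; case: ifP => [reshare | direct]; last by rewrite qsh_n /qsh direct pos_direct.
under eq_bigr => i _ do rewrite qsh_n piece_sim //.
by rewrite big_split /= sum_mulrb_eq /qsh reshare.
Qed.

Lemma qsh_sim c n z j : (n < b)%N ->
  qsh a (sim c) n z j = qsh a c n z j + shift c n.+1 z *+ (j == qp c n z).
Proof. by move=> lt_nb; apply: qsh_sim_step => // w j'; apply/sh_sim/ltnW. Qed.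

Lemma sim_in_Omega c : c \in Omega t b s -> sim c \in Omega t b s'.
Proof.
move=> c_in; have := c_in; rewrite !inE => /andP[/forallP sum_pi1 /forallP sum_om].
apply/andP; split; apply/forallP => i.
  under eq_bigr => j _ do rewrite pi1_sim -[j == _]andbT.
  by rewrite big_split /= (eqP (sum_pi1 i)) sum_mulrb_eq /delta addrC subrK.
apply/forallP => z; under eq_bigr => j _ do rewrite ffunE.
rewrite big_split /= (eqP (forallP (sum_om i) z)) add0r sumrMnl.
case: (val i == ks); rewrite ?mulr0n // mulr1n /remask_ks sumrB !big_split /=.
rewrite !(sum_sh _ _ c_in (ltnW lt_ks_b)).
under eq_bigr => j _ do rewrite -[j == _]andbT.
under [X in _ - (_ + X)]eq_bigr => j _ do rewrite -[j == _]andbT.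
rewrite !sum_mulrb_eq /delta_ks /shift leqnn /delta /= permM.
by rewrite [s _ + _]addrC subrK [s _ + _]addrC subrK subrr.
Qed.

Hypothesis hidden_init : forall c i, obsBy B C 0 (pos c 0 i) = false.
Hypothesis honest_ks : forall j, obsBy B C ks j = false.
Hypothesis hidden_reshare : a -> forall c k z, (k < b)%N ->
  obsBy B C k (qp c k z) = false /\
  obsBy B C (if (k.+1 < b)%N then k.+1 else k) (pos c k.+1 z) = false.
Hypothesis hidden_pass : ~~ a -> forall c k z, (k.+1 < b)%N ->
  obsBy B C k (pos c k.+1 z) = false /\ obsBy B C k.+1 (pos c k.+1 z) = false.
Hypothesis hidden_final : forall c z,
  obsBy B C b.-1 (pos c b z) = false /\ inr (z, pos c b z) \notin C.

Lemma view_sim c : view B a C (sim c) = view B a C c.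
Proof.
apply: functional_extensionality => l; rewrite /view.
case: l => [i j|k|k z j|k z j j'|k z j|z j] /=; case: ifP => // seen; congr Some.
- rewrite pi1_sim; case: eqP => [pos_j|]; last by rewrite mulr0n addr0.
  by rewrite pos_j hidden_init in seen.
- rewrite rhoN_sim; case: eqP => // k_ks.
  by case/existsP: seen => j; rewrite k_ks honest_ks.
- rewrite omN_sim; case: eqP => [k_ks|]; last by rewrite mulr0n addr0.
  by rewrite k_ks !honest_ks in seen.
- rewrite qsh_sim // piece_sim //; case: andP => [[/eqP qp_j /eqP pos_j']|]; last first.
    by rewrite mulr0n addr0.
  case/andP: seen => reshare; have [hid_q hid_p] := hidden_reshare reshare c z (ltn_ord k).
  by rewrite qp_j pos_j' hid_q hid_p.
- case/andP: seen => /andP[direct lt_k1b] seen.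
  rewrite qsh_sim // pos_direct ?(negbTE direct) //; case: eqP => [pos_j|]; last first.
    by rewrite mulr0n addr0.
  by have [hid_k hid_k1] := hidden_pass direct c z lt_k1b; rewrite pos_j hid_k hid_k1 in seen.
- rewrite /phi sh_sim //; case: eqP => [pos_j|]; last by rewrite mulr0n addr0.
  by have [hid_b hid_path] := hidden_final c z; rewrite pos_j hid_b (negbTE hid_path) in seen.
Qed.

Lemma rhoN_sim_inj c1 c2 : sim c1 = sim c2 -> forall n, rhoN c1 n = rhoN c2 n.
Proof.
move=> eq_sim; have eq_rho_off n : n != ks -> rhoN c1 n = rhoN c2 n.
  by move=> ne_n; have := congr1 (fun c => rhoN c n) eq_sim; rewrite !rhoN_sim (negbTE ne_n).
have eq_tail : mix_tail c1 = mix_tail c2.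
  by apply: tau_suffix_eq => // k lt_ks_k; rewrite eq_rho_off // gtn_eqF.
move=> n; have [-> | ] := eqVneq n ks; last exact: eq_rho_off.
have := congr1 (fun c => rhoN c ks) eq_sim; rewrite !rhoN_sim eqxx /rho_sim eq_tail.
exact: mulgI.
Qed.

Lemma sim_inj : injective sim.
Proof.
move=> c1 c2 eq_sim; have eq_rho := rhoN_sim_inj eq_sim.
have eq_tau n : tau c1 n = tau c2 n by apply: eq_tau.
have eq_tail : mix_tail c1 = mix_tail c2 by rewrite /mix_tail !eq_tau.
have eq_perms : c1.1.1.2 = c2.1.1.2.
  by apply/ffunP => k; have := eq_rho k; rewrite /rhoN valK.
have eq_pos n z := (pos_perms eq_perms n z).1.
have eq_qp n z := (pos_perms eq_perms n z).2.
have eq_rho_sim : rho_sim c1 = rho_sim c2 by rewrite /rho_sim eq_tail eq_rho.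
have eq_delta_ks z : delta_ks c1 z = delta_ks c2 z by rewrite /delta_ks eq_rho_sim !eq_tau.
have eq_shift n z : shift c1 n z = shift c2 n z by rewrite /shift eq_delta_ks !eq_tau.
have eq_pi1 : c1.1.1.1 = c2.1.1.1.
  apply/ffunP => -[i j]; have := congr1 (fun c => pi1 c i j) eq_sim.
  by rewrite !pi1_sim eq_pos => /addIr.
have eq_om_off n z j : n != ks -> omN c1 n z j = omN c2 n z j.
  move=> ne_n; have := congr1 (fun c => omN c n z j) eq_sim.
  by rewrite !omN_sim (negbTE ne_n) !mulr0n !addr0.
have eq_rs n z j l : (n < b)%N -> rsN c1 n z j l = rsN c2 n z j l.
  move=> lt_nb; have := congr1 (fun c => rsN c n z j l) eq_sim.
  by rewrite !rsN_sim // eq_pos eq_qp eq_shift => /addIr.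
have eq_sh_ks : forall z j, sh a c1 ks z j = sh a c2 ks z j.
  apply: eq_sh => // [n z j lt_n_ks | n z j l lt_n_ks].
  - by rewrite eq_om_off ?ltn_eqF.
  - exact/eq_rs/(ltn_trans lt_n_ks).
apply: coins_eq => // [k z j | k z j l]; last exact/eq_rs/ltn_ord.
have [k_ks | ] := eqVneq (val k) ks; last exact: eq_om_off.
have := congr1 (fun c => omN c k z j) eq_sim; rewrite !omN_sim k_ks eqxx mulr1n.
by rewrite /remask_ks eq_rho_sim eq_rho !eq_sh_ks eq_delta_ks eq_shift eq_pos eq_qp => /addIr.
Qed.

Lemma sim_view_simulation : view_simulation B a C s s' pi.
Proof.
exists sim; first exact: sim_inj.
by move=> c c_in; split; [apply: sim_in_Omega | apply: view_sim | apply: tau_sim].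
Qed.

End Construction.

Section Instances.
Local Close Scope ring_scope.
Variables (S : finZmodType) (t m b v : nat) (B : 'I_b -> 'I_t.+1 -> 'I_m)
  (C : {set Party t m v}).
Hypotheses (verif : verifiers B) (card_C : #|C| <= t).
Implicit Types (c : Coins S t b v) (s : Msg S v).

Let honest_block : exists ks : 'I_b, forall j, obsBy B C ks j = false.
Proof.
have [_ avoid] := verif.
have [ks ks_honest] := avoid _ (leq_trans (card_corrupt_servers C) card_C).
by exists ks => j; rewrite obsBy_block; apply/negbTE.
Qed.

Lemma view_simulation_resharing s s' pi : view_simulation B true C s s' pi.
Proof.
have [B_inj _] := verif; have [ks honest_ks] := honest_block.
pose u n := odflt ord0 [pick j | ~~ obsBy B C n j].
have u_hidden n : n < b -> obsBy B C n (u n) = false.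
  move=> lt_nb; apply/negbTE; apply: (odflt_pickP (P := fun j => ~~ obsBy B C n j)).
  exact: exists_unobserved (B_inj (Ordinal lt_nb)) card_C.
have lt_0b : 0 < b := leq_ltn_trans (leq0n ks) (ltn_ord ks).
have lt_b1_b : b.-1 < b by rewrite prednK.
pose exit z := odflt ord0 [pick j | ~~ obsBy B C b.-1 j && (inr (z, j) \notin C)].
have exit_hidden z : obsBy B C b.-1 (exit z) = false /\ inr (z, exit z) \notin C.
  suff /andP[/negbTE] : ~~ obsBy B C b.-1 (exit z) && (inr (z, exit z) \notin C) by [].
  apply: (odflt_pickP (P := fun j => ~~ obsBy B C b.-1 j && (inr (z, j) \notin C))).
  exact: exists_hidden_exit z (B_inj (Ordinal lt_b1_b)) card_C.
apply: (@sim_view_simulation _ _ _ _ _ _ _ _ ks s s' pi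
  (fun _ n z => if n < b then u n else exit z) (fun _ n _ => u n)) => //.
- by move=> c n z lt_nb _ /=; rewrite lt_nb.
- by move=> c i; rewrite lt_0b u_hidden.
- move=> _ c k z lt_kb; split; first exact: u_hidden.
  case: ifP => [lt_k1b | /negbT]; first exact: u_hidden.
  rewrite -leqNgt => le_b_k1; have -> : k = b.-1 by lia.
  exact: (exit_hidden z).1.
- by move=> c z; rewrite ltnn; apply: exit_hidden.
Qed.

Lemma view_simulation_confined s s' pi : t_confined B -> view_simulation B false C s s' pi.
Proof.
move=> confined; have [B_inj _] := verif; have [ks honest_ks] := honest_block.
have card_PT := card_positions B_inj confined ks (leq_trans (card_corrupt_servers C) card_C).
set PT := positions B (corrupt_servers C) in card_PT *.
pose j0 := odflt ord0 [pick j | j \notin PT].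
have j0_out : j0 \notin PT.
  apply: (odflt_pickP (P := fun j => j \notin PT)); apply: exists_notin.
  by rewrite card_ord ltnS (leq_trans card_PT) ?(leq_trans (card_corrupt_servers C)).
pose exit z := odflt ord0 [pick j | (j \notin PT) && (inr (z, j) \notin C)].
have exit_out z : (exit z \notin PT) && (inr (z, exit z) \notin C).
  apply: (odflt_pickP (P := fun j => (j \notin PT) && (inr (z, j) \notin C))).
  exact: exists_hidden_path z card_C card_PT.
(* Before the honest block the shifted share stays at [j0]; afterwards it sits
   at the exit position of the recipient it is routed to. *)
pose pos c n z := if n <= ks then j0 else exit ((tau c b)^-1%g (tau c n z)).
have pos_out c n z : pos c n z \notin PT.
  by rewrite /pos; case: ifP => _ //; case/andP: (exit_out ((tau c b)^-1%g (tau c n z))).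
apply: (@sim_view_simulation _ _ _ _ _ _ _ _ ks s s' pi pos (fun c n z => pos c n.+1 z)) => //.
- move=> c1 c2 eq_perms n z; suff eq_tau' k : tau c1 k = tau c2 k by rewrite /pos !eq_tau'.
  by apply: eq_tau => k' _; rewrite /rhoN eq_perms.
- by move=> c n z lt_nb ne_n_ks; rewrite /pos ltn_neqAle ne_n_ks /= permM.
- by move=> c i; apply: obsBy_notin_positions.
- by move=> _ c k z _; rewrite !obsBy_notin_positions.
- move=> c z; rewrite obsBy_notin_positions // /pos leqNgt ltn_ord /= permK.
  by case/andP: (exit_out z) => _ ->.
Qed.

End Instances.

Theorem corollary2 (S : finZmodType) (t m b v : nat) (B : 'I_b -> 'I_t.+1 -> 'I_m)
  (a : bool) :
  (0 < t)%N -> verifiers B -> (a = false -> t_confined B) ->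
  @perfectly_reliable S t b v a /\ @perfectly_private S t m b v B a /\
  @perfectly_anonymous S t m b v B a.
Proof.
move=> _ verif confined; split; first exact: protocol_reliable.
have simulate (C : {set Party t m v}) : (#|C| <= t)%N ->
    forall s s' : Msg S v, forall pi, view_simulation B a C s s' pi.
  move=> card_C s s' pi; case: a confined => [_ | /(_ erefl) confined].
    exact: view_simulation_resharing.
  exact: view_simulation_confined.
split=> D _ C card_C i.
  by have := same_guess_message (simulate C card_C) D i.
by have := same_guess_recipient (simulate C card_C) D i.
Qed.
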